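(* For every positive integer $h$ there are $\eta=\eta(h)>0$ and $\alpha=\alpha(h)>0$ such that the following holds for every oriented graph $H$ on $h$ vertices. Let $H_1,\dots,H_\ell$ be a partition of $V(H)$ such that each $H_i$ induces an acyclic digraph and for every $1\le i<j\le\ell$ either $H_i\rightarrow H_j$ or $H_j\rightarrow H_i$. Let $W_1,\dots,W_\ell$ be pairwise disjoint vertex sets in a tournament $T$ such that (1) $|W_i|\ge 2^{h-1}$ for every $1\le i\le\ell$, and (2) for every $1\le i\ne j\le\ell$, if $H_i\rightarrow H_j$ then $d(W_i,W_j)\ge 1-\eta$. Then $T$ contains at least $\alpha\cdot\prod_{i=1}^{\ell}|W_i|^{h_i}$ copies of $H$, where $h_i=|H_i|$.
   Context: An oriented graph is a directed graph without loops with at most one edge between any two distinct vertices. For disjoint vertex sets $X,Y$ of a digraph, $X\rightarrow Y$ means there is no pair $(x,y)\in X\times Y$ with an edge from $y$ to $x$. For disjoint $X,Y\subseteq V(T)$ in a tournament $T$, $d(X,Y)$ is the fraction of pairs $(x,y)\in X\times Y$ with $(x,y)\in E(T)$. A copy of $H$ is a (not necessarily induced) subgraph isomorphic to $H$. *)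

From HB Require Import structures.
From mathcomp Require Import all_boot all_order all_algebra.
Set Implicit Arguments. Unset Strict Implicit. Unset Printing Implicit Defensive.
Import Order.TTheory GRing.Theory Num.Theory.

Definition oriented (V : finType) (e : rel V) : Prop :=
  irreflexive e /\ forall x y, e x y -> ~~ e y x.

Definition tournament (V : finType) (t : rel V) : Prop :=
  oriented t /\ forall x y, x != y -> t x y || t y x.

Definition arrow (V : finType) (e : rel V) (X Y : {set V}) : Prop :=
  forall x y, x \in X -> y \in Y -> ~~ e y x.

(* The digraph induced by e on A has no directed cycle (closed walk of
   positive length inside A). *)
Definition acyclic_on (V : finType) (e : rel V) (A : {set V}) : Prop :=
  forall (x : V) (p : seq V), x \in A -> all (mem A) p ->
    path e x p -> last x p = x -> p = [::].

Definition dens (R : realFieldType) (V : finType) (t : rel V) (X Y : {set V}) : R :=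
  (#|[set p in setX X Y | t p.1 p.2]|%:R / (#|X| * #|Y|)%:R)%R.

(* (S,E) is a (not necessarily induced) subgraph of T isomorphic to H. *)
Definition is_copy (h : nat) (VT : finType) (e : rel 'I_h) (t : rel VT)
    (SE : {set VT} * {set (VT * VT)}) : bool :=
  [forall p in SE.2, t p.1 p.2] &&
  [exists f : {ffun 'I_h -> VT}, injectiveb f && (SE.1 == f @: [set: 'I_h]) &&
     (SE.2 == [set (f p.1, f p.2) | p in [set q : 'I_h * 'I_h | e q.1 q.2]])].

Definition ncopies (h : nat) (VT : finType) (e : rel 'I_h) (t : rel VT) : nat :=
  #|[set SE : {set VT} * {set (VT * VT)} | is_copy e t SE]|.

Definition block (h l : nat) (part : 'I_h -> 'I_l) (i : 'I_l) : {set 'I_h} :=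
  [set x | part x == i].

(* Order each block H_i along a linear extension of its acyclic digraph. A tournament on
   n >= 2^(k-1) vertices contains at least c_k n^k maps of k ordered vertices that are
   transitive in that order: send the lowest vertex to some x and recurse into the
   out-neighbourhood of x, which has at least n/4 vertices for at least n/8 choices of x.
   Choosing such a map on every W_i independently gives c^l prod |W_i|^(h_i) maps V(H) -> T
   that respect every edge inside a block. A map that breaks a cross edge u -> v sends
   (u, v) to one of the at most eta |W_i| |W_j| non-edges from W_i to W_j, so for small eta
   at most half of the maps are bad; the others are injective homomorphisms, and each copy
   of H comes from at most (h+1)^h of them. *)

From HB Require Import structures.
From mathcomp Require Import all_boot all_order all_algebra.
From mathcomp Require Import zify ring lra.
Import Order.TTheory GRing.Theory Num.Theory.
Set Implicit Arguments. Unset Strict Implicit. Unset Printing Implicit Defensive.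

Lemma card_dep_pairs (T U : finType) (A : {set T}) (F : T -> {set U}) :
  #|[set p : T * U | (p.1 \in A) && (p.2 \in F p.1)]| = \sum_(x in A) #|F x|.
Proof.
rewrite -sum1dep_card.
rewrite -(pair_big_dep (mem A) (fun x y => y \in F x) (fun _ _ => 1)) /=.
by apply: eq_bigr => x _; rewrite sum1_card.
Qed.

Lemma leq_card_bigcup (I T : finType) (P : pred I) (S : I -> {set T}) :
  #|\bigcup_(i | P i) S i| <= \sum_(i | P i) #|S i|.
Proof.
elim/big_rec2: _ => [|i n U _ le]; first by rewrite cards0.
by rewrite (leq_trans (leq_card_setU _ _).1) ?leq_add2l.
Qed.

Lemma card_ffun_family (aT rT : finType) (A : aT -> {set rT}) :
  #|[set f : {ffun aT -> rT} | [forall x, f x \in A x]]| = \prod_x #|A x|.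
Proof.
have -> : \prod_x #|A x| = #|family (fun x => mem (A x))|.
  by rewrite card_family /image_mem foldrE big_map enumT.
by apply: eq_card => f; rewrite inE; apply/forallP/familyP.
Qed.

Definition out_nbhd (VT : finType) (t : rel VT) (W : {set VT}) (x : VT) :=
  [set y in W | t x y].

Section OutDegrees.

Variables (VT : finType) (t : rel VT).
Hypothesis t_total : forall x y, x != y -> t x y || t y x.

Lemma sum_out_degree_ge (W : {set VT}) :
  #|W| * #|W| <= #|W| + 2 * \sum_(x in W) #|out_nbhd t W x|.
Proof.
rewrite -card_dep_pairs; set E := [set p | _].
have swap_inj : injective (fun p : VT * VT => (p.2, p.1)) by move=> [a b] [c d] [-> ->].
have cover : setX W W \subset (E :|: [set (p.2, p.1) | p in E]) :|: [set (x, x) | x in W].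
  apply/subsetP => -[a b]; rewrite !inE /= => /andP[aW bW].
  have [<-|ab] := eqVneq a b; first by rewrite imset_f ?orbT.
  case/orP: (t_total ab) => tab; first by rewrite aW bW tab.
  have baE : (b, a) \in E by rewrite !inE /= aW bW tab.
  by rewrite (imset_f (fun p : VT * VT => (p.2, p.1)) baE) orbT.
rewrite -cardsX; apply: leq_trans (subset_leq_card cover) _.
apply: leq_trans (leq_card_setU _ _).1 _.
have := leq_imset_card (fun x => (x, x)) W.
have := (leq_card_setU E [set (p.2, p.1) | p in E]).1.
rewrite (card_imset _ swap_inj); lia.
Qed.

Lemma exists_out_degree_ge (W : {set VT}) :
  0 < #|W| -> exists2 x, x \in W & #|W| <= 2 * #|out_nbhd t W x| + 1.
Proof.
move=> W0; apply/exists_inP; apply: contraLR W0 => /exists_inPn small.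
have := sum_out_degree_ge W.
have : \sum_(x in W) (2 * #|out_nbhd t W x| + 2) <= \sum_(x in W) #|W|.
  by apply: leq_sum => x /small; lia.
rewrite big_split /= -big_distrr /= !sum_nat_const; nia.
Qed.

Lemma many_out_degree_ge (W : {set VT}) :
  4 <= #|W| -> #|W| <= 8 * #|[set x in W | #|W| <= 4 * #|out_nbhd t W x|]|.
Proof.
move=> W4; set n := #|W| in W4 *; set P := fun x => n <= 4 * #|out_nbhd t W x|.
change (n <= 8 * #|[set x in W | P x]|).
have le_n x : #|out_nbhd t W x| <= n.
  by apply/subset_leq_card/subsetP => y; rewrite inE => /andP[].
have high : \sum_(x in W | P x) #|out_nbhd t W x| <= n * #|[set x in W | P x]|.
  by rewrite -sum1dep_card big_distrr; apply: leq_sum => x _; rewrite /= muln1 le_n.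
have low : 4 * \sum_(x in W | ~~ P x) #|out_nbhd t W x| <= n * n.
  rewrite -{3}/n -sum_nat_const big_distrr big_mkcondr /=.
  by apply: leq_sum => x _; case: ifP => //; rewrite /P -ltnNge => /ltnW.
have := sum_out_degree_ge W; rewrite (bigID P) /= -/n => sum_ge.
have : n * n <= n * (2 + 4 * #|[set x in W | P x]|) by lia.
rewrite leq_mul2l; lia.
Qed.

Lemma sum_out_degree_pow_ge (W : {set VT}) k :
  4 <= #|W| ->
  #|W| ^ k.+1 <= 8 * 4 ^ k * \sum_(x in W | #|W| <= 4 * #|out_nbhd t W x|) #|out_nbhd t W x| ^ k.
Proof.
move=> W4; rewrite expnS -mulnA.
apply: leq_trans (leq_mul (many_out_degree_ge W4) (leqnn _)) _.
rewrite -mulnA leq_mul2l /= -sum1dep_card big_distrl big_distrr /=.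
apply: leq_sum => x /andP[_ high]; rewrite mul1n -expnMn.
by case: k => [|k]; rewrite ?expn0 ?leq_exp2r.
Qed.

End OutDegrees.

(* [2 ^ (k+2)^2] dominates both [(2 ^ (k+2)) ^ (k+1)] and [8 * 4 ^ k], the losses in the two
   cases of the induction step. *)
Fixpoint emb_const {R : numFieldType} (k : nat) : R :=
  if k is k'.+1 then (emb_const k' / (2 ^ (k'.+2 * k'.+2))%N%:R)%R else 1%R.

Section EmbConst.

Variable R : numFieldType.
Local Open Scope ring_scope.

Lemma emb_const_gt0 k : 0 < emb_const k :> R.
Proof. by elim: k => [|k IH] /=; rewrite ?ltr01 ?divr_gt0 ?ltr0n ?expn_gt0. Qed.

Lemma emb_const_le1 k : emb_const k <= 1 :> R.
Proof.
elim: k => [|k IH] //=; rewrite ler_pdivrMr ?ltr0n ?expn_gt0 // mul1r.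
by apply: le_trans IH _; rewrite ler1n expn_gt0.
Qed.

Lemma emb_const_le m n : (m <= n)%N -> emb_const n <= emb_const m :> R.
Proof.
elim: n => [|n IH]; first by rewrite leqn0 => /eqP ->.
rewrite leq_eqVlt => /predU1P[-> //|/IH]; apply: le_trans => /=.
rewrite ler_pdivrMr ?ltr0n ?expn_gt0 //; apply: ler_peMr.
  exact/ltW/emb_const_gt0.
by rewrite ler1n expn_gt0.
Qed.

End EmbConst.

Section OrderedEmbeddings.

Variables (h : nat) (VT : finType) (t : rel VT) (v0 : VT) (kap : 'I_h -> nat).

(* Maps defined on [B] are encoded as total maps that send everything outside [B] to [v0]. *)
Definition ordered_emb (B : {set 'I_h}) (W : {set VT}) : {set {ffun 'I_h -> VT}} :=
  [set g : {ffun 'I_h -> VT} | [forall x, if x \in B then g x \in W else g x == v0] &&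
           [forall u, forall v, [&& u \in B, v \in B & kap u < kap v] ==> t (g u) (g v)]].

Lemma card_ordered_emb0_gt0 (W : {set VT}) : 0 < #|ordered_emb set0 W|.
Proof.
apply/card_gt0P; exists [ffun => v0]; rewrite inE.
by apply/andP; split; apply/forallP => x; rewrite ?inE ?ffunE //; apply/forallP => y; rewrite inE.
Qed.

Lemma sum_card_ordered_emb_le (B : {set 'I_h}) (W : {set VT}) (u0 : 'I_h) :
  u0 \in B -> (forall u, u \in B -> kap u0 <= kap u) ->
  \sum_(x in W) #|ordered_emb (B :\ u0) (out_nbhd t W x)| <= #|ordered_emb B W|.
Proof.
move=> u0B u0_min; rewrite -card_dep_pairs.
pose ext (p : VT * {ffun 'I_h -> VT}) := [ffun y => if y == u0 then p.1 else p.2 y].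
have ext_inj : {in [set p | (p.1 \in W) && (p.2 \in ordered_emb (B :\ u0) (out_nbhd t W p.1))] &,
                 injective ext}.
  move=> [x g] [x' g']; rewrite !inE /= => /andP[_ /andP[/forallP g_out _]].
  move=> /andP[_ /andP[/forallP g'_out _]] /ffunP ext_eq.
  have := ext_eq u0; rewrite !ffunE eqxx /= => <-; congr pair; apply/ffunP => y.
  have [->|yu0] := eqVneq y u0; last by have := ext_eq y; rewrite !ffunE (negbTE yu0).
  by have := g_out u0; have := g'_out u0; rewrite !inE eqxx /= => /eqP-> /eqP->.
rewrite -(card_in_imset ext_inj); apply/subset_leq_card/subsetP => _ /imsetP[[x g] + ->].
rewrite !inE /= => /andP[xW /andP[/forallP g_out /forallP g_ord]].
apply/andP; split; apply/forallP => u; rewrite !ffunE /=.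
  have [->|uu0] := eqVneq u u0; first by rewrite u0B.
  by have := g_out u; rewrite !inE uu0 /=; case: (u \in B) => // /andP[].
apply/forallP => v; rewrite ffunE; apply/implyP => /and3P[uB vB lt_uv].
have vu0 : v != u0 by apply: contraTneq lt_uv => ->; rewrite -leqNgt u0_min.
have := g_out v; rewrite (negbTE vu0) !inE vu0 vB /= => /andP[_ t_xgv].
have [//|uu0] := eqVneq u u0.
by have := g_ord u => /forallP/(_ v); rewrite !inE uu0 vu0 uB vB lt_uv.
Qed.

Hypothesis t_total : forall x y, x != y -> t x y || t y x.

Section InductionStep.

Variables (R : realFieldType) (k : nat) (W : {set VT}) (F : VT -> nat) (G : nat).
Local Open Scope ring_scope.
Hypothesis sum_le : (\sum_(x in W) F x <= G)%N.
Hypothesis IH : forall x, (0 < k -> 2 ^ k.-1 <= #|out_nbhd t W x|)%N ->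
  emb_const k * #|out_nbhd t W x|%:R ^+ k <= (F x)%:R :> R.

Lemma ordered_emb_step_small : (2 ^ k <= #|W| < 2 ^ k.+2)%N ->
  emb_const k.+1 * #|W|%:R ^+ k.+1 <= G%:R :> R.
Proof.
move=> /andP[W_ge W_lt].
have [x xW guard] : exists2 x, x \in W & (0 < k -> 2 ^ k.-1 <= #|out_nbhd t W x|)%N.
  have W0 : (0 < #|W|)%N by apply: leq_trans W_ge; rewrite expn_gt0.
  have [x xW deg_x] := exists_out_degree_ge t_total W0; exists x => // k0.
  by move: W_ge deg_x; rewrite -(prednK k0) expnS /=; lia.
have Fx_gt0 : (0 < F x)%N.
  rewrite -(ltr0n R); apply: lt_le_trans (IH guard); rewrite mulr_gt0 ?emb_const_gt0 //.
  have [->|k0] := posnP k; first by rewrite expr0 ltr01.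
  by rewrite exprn_gt0 // ltr0n (leq_trans _ (guard k0)) ?expn_gt0.
have G_ge1 : (1 <= G)%N.
  by apply: leq_trans sum_le; rewrite (bigD1 x) //= (leq_trans Fx_gt0) ?leq_addr.
apply: le_trans (_ : 1 <= G%:R); last by rewrite ler1n.
rewrite /= mulrAC ler_pdivrMr ?ltr0n ?expn_gt0 // mul1r.
apply: le_trans (_ : #|W|%:R ^+ k.+1 <= _); first by rewrite ler_piMl ?exprn_ge0 ?emb_const_le1.
rewrite -natrX ler_nat (@leq_trans ((2 ^ k.+2) ^ k.+1)) ?leq_exp2r ?(ltnW W_lt) //.
by rewrite -expnM leq_exp2l // leq_mul2l leqnSn orbT.
Qed.

Lemma ordered_emb_step_large : (2 ^ k.+2 <= #|W|)%N ->
  emb_const k.+1 * #|W|%:R ^+ k.+1 <= G%:R :> R.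
Proof.
move=> W_ge; set P := fun x => (#|W| <= 4 * #|out_nbhd t W x|)%N.
set N := (2 ^ (k.+2 * k.+2))%N; set S := (\sum_(x in W | P x) #|out_nbhd t W x| ^ k)%N.
have W4 : (4 <= #|W|)%N by apply: leq_trans W_ge; rewrite !expnS mulnA leq_pmulr ?expn_gt0.
have pow_le : (#|W| ^ k.+1 <= N * S)%N.
  apply: leq_trans (sum_out_degree_pow_ge t_total k W4) _; rewrite leq_mul2r; apply/orP; right.
  by rewrite -[4%N]/(2 ^ 2)%N -expnM -[8%N]/(2 ^ 3)%N -expnD leq_exp2l //; nia.
rewrite /= -/N mulrAC ler_pdivrMr ?ltr0n ?expn_gt0 //.
apply: le_trans (_ : emb_const k * (N * S)%:R <= _).
  by rewrite ler_wpM2l ?(ltW (emb_const_gt0 R k)) // -natrX ler_nat.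
rewrite natrM mulrCA [G%:R * _]mulrC ler_wpM2l // natr_sum mulr_sumr.
apply: le_trans (_ : \sum_(x in W | P x) (F x)%:R <= _).
  apply: ler_sum => x /andP[_ Px]; rewrite natrX; apply: IH => _.
  have : (2 ^ k <= #|out_nbhd t W x|)%N by move: Px W_ge; rewrite /P !expnS; lia.
  by apply: leq_trans; rewrite leq_exp2l // leq_pred.
by rewrite -natr_sum ler_nat (leq_trans _ sum_le) // [X in (_ <= X)%N](bigID P) leq_addr.
Qed.

End InductionStep.

Lemma card_ordered_emb_ge (R : realFieldType) k (B : {set 'I_h}) (W : {set VT}) :
  #|B| = k -> (0 < k -> 2 ^ k.-1 <= #|W|) ->
  (emb_const k * #|W|%:R ^+ k <= #|ordered_emb B W|%:R :> R)%R.
Proof.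
elim: k B W => [|k IH] B W card_B W_ge.
  by move/eqP: card_B; rewrite cards_eq0 => /eqP ->; rewrite mul1r ler1n card_ordered_emb0_gt0.
have [u1 u1B] : exists u, u \in B by apply/card_gt0P; rewrite card_B.
have [u0 u0B u0_min] : exists2 u0, u0 \in B & forall u, u \in B -> kap u0 <= kap u.
  by case: (arg_minnP kap u1B) => u0; exists u0.
have card_B' : #|B :\ u0| = k by move: card_B; rewrite (cardsD1 u0 B) u0B => -[].
have sum_le := sum_card_ordered_emb_le W u0B u0_min.
have IH' x guard := IH (B :\ u0) (out_nbhd t W x) card_B' guard.
have [W_lt|W_large] := ltnP #|W| (2 ^ k.+2).
  by apply: (ordered_emb_step_small sum_le IH'); rewrite W_lt W_ge.
exact: (ordered_emb_step_large sum_le IH' W_large).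
Qed.

End OrderedEmbeddings.

Section BlockRank.

Variables (h l : nat) (e : rel 'I_h) (part : 'I_h -> 'I_l).

Definition block_edge : rel 'I_h := [rel x y | e x y && (part x == part y)].

(* Scaling by [h] lets the index of [u] break ties, which makes the rank injective. *)
Definition block_rank (u : 'I_h) : nat := #|[set w | connect block_edge w u]| * h + u.

Lemma block_rank_inj : injective block_rank.
Proof.
move=> u v /(congr1 (modn^~ h)); rewrite /block_rank !modnMDl !modn_small //.
exact: val_inj.
Qed.

Lemma block_edge_path_part v p : path block_edge v p -> all (fun y => part y == part v) p.
Proof.
elim: p v => [//|y p IH] v /= /andP[/andP[_ /eqP ->] /IH].
by rewrite eqxx.
Qed.

Hypothesis block_acyclic : forall i, acyclic_on e (block part i).

Lemma block_rank_lt u v : e u v -> part u = part v -> block_rank u < block_rank v.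
Proof.
move=> euv puv.
have uv_edge : block_edge u v by rewrite /block_edge /= euv puv eqxx.
suff : #|[set w | connect block_edge w u]| < #|[set w | connect block_edge w v]|.
  by rewrite /block_rank; have := ltn_ord u; nia.
apply: proper_card; apply/properP; split.
  by apply/subsetP => w; rewrite !inE => /connect_trans; apply; exact: connect1.
exists v; rewrite !inE ?connect0 //; apply/negP => /connectP[p vp up].
have blk_u : u \in block part (part u) by rewrite inE.
have blk_vp : all (mem (block part (part u))) (v :: p).
  apply/allP => y; rewrite inE => /predU1P[->|/(allP (block_edge_path_part vp))];
    by rewrite /= inE puv.
have e_path : path e u (v :: p) by rewrite /= euv (sub_path _ vp) // => x y /andP[].
by have := block_acyclic blk_u blk_vp e_path (esym up).
Qed.

End BlockRank.

Definition inj_homs h (VT : finType) (e : rel 'I_h) (t : rel VT) : {set {ffun 'I_h -> VT}} :=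
  [set f : {ffun 'I_h -> VT} | [forall u, forall v, e u v ==> t (f u) (f v)] && injectiveb f].

Lemma card_inj_homs_le h (VT : finType) (e : rel 'I_h) (t : rel VT) :
  #|inj_homs e t| <= ncopies e t * h.+1 ^ h.
Proof.
pose copy (f : {ffun 'I_h -> VT}) : {set VT} * {set (VT * VT)} :=
  (f @: [set: 'I_h], [set (f p.1, f p.2) | p in [set q : 'I_h * 'I_h | e q.1 q.2]]).
(* A map is recovered from its copy and the position of each [f x] in [enum] of the image. *)
pose pos (f : {ffun 'I_h -> VT}) : {ffun 'I_h -> 'I_h.+1} :=
  [ffun x => inord (index (f x) (enum (f @: [set: 'I_h])))].
have posE f x : pos f x = index (f x) (enum (f @: [set: 'I_h])) :> nat.
  rewrite ffunE inordK // ltnS (leq_trans (index_size _ _)) // -cardE.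
  by rewrite (leq_trans (leq_imset_card _ _)) // cardsT card_ord.
have inj : {in inj_homs e t &, injective (fun f => (copy f, pos f))}.
  move=> f g _ _ [im_fg _ /ffunP pos_fg]; apply/ffunP => x.
  have f_im y : f y \in enum (g @: [set: 'I_h]) by rewrite -im_fg mem_enum imset_f.
  have := congr1 val (pos_fg x); rewrite /= !posE im_fg => idx_fg.
  by rewrite -(nth_index (f x) (f_im x)) idx_fg nth_index // mem_enum imset_f.
have card_pos : #|[set: {ffun 'I_h -> 'I_h.+1}]| = h.+1 ^ h by rewrite cardsT card_ffun !card_ord.
rewrite -(card_in_imset inj) /ncopies -card_pos -cardsX.
apply/subset_leq_card/subsetP => _ /imsetP[f + ->].
rewrite !inE andbT => /andP[/forallP hom f_inj]; apply/andP; split.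
  apply/forallP => p; apply/implyP => /imsetP[q]; rewrite inE => eq ->.
  by have /forallP/(_ q.2) := hom q.1; rewrite eq.
by apply/existsP; exists f; rewrite f_inj !eqxx.
Qed.

Section NonEdges.

Variables (R : realFieldType) (VT : finType) (t : rel VT).
Local Open Scope ring_scope.

Lemma card_nonedge_pairs_le (X Y : {set VT}) (eta : R) :
  1 - eta <= dens R t X Y ->
  #|[set p in setX X Y | ~~ t p.1 p.2]|%:R <= eta * (#|X| * #|Y|)%:R.
Proof.
have split : (#|[set p in setX X Y | t p.1 p.2]| + #|[set p in setX X Y | ~~ t p.1 p.2]|
              = #|X| * #|Y|)%N.
  rewrite -cardsX -(cardsID [set p | t p.1 p.2] (setX X Y)).
  by congr (_ + _); apply: eq_card => p; rewrite !inE andbC.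
have [XY0|XY_gt0] := posnP (#|X| * #|Y|).
  by move: split; rewrite XY0 => /eqP; rewrite addn_eq0 => /andP[_ /eqP ->]; rewrite mulr0.
rewrite /dens ler_pdivlMr ?ltr0n // -{}split natrD; lra.
Qed.

Lemma card_nonedge_ffun_le (I : finType) (A : I -> {set VT}) (u v : I) (eta : R) :
  u != v -> 1 - eta <= dens R t (A u) (A v) ->
  #|[set f : {ffun I -> VT} | [forall x, f x \in A x] && ~~ t (f u) (f v)]|%:R
    <= eta * (\prod_x #|A x|)%:R.
Proof.
move=> uv dens_uv; set BP := [set p in setX (A u) (A v) | ~~ t p.1 p.2].
set rest := (\prod_(x | (x != u) && (x != v)) #|A x|)%N.
pose A_at (p : VT * VT) x := if x == u then [set p.1] else if x == v then [set p.2] else A x.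
have card_A_at p : #|[set f : {ffun I -> VT} | [forall x, f x \in A_at p x]]| = rest.
  rewrite card_ffun_family (bigD1 u) //= (bigD1 v) 1?eq_sym //= /A_at eqxx eq_sym (negbTE uv) eqxx.
  rewrite !cards1 !mul1n; apply: eq_bigr => x /andP[xu xv].
  by rewrite (negbTE xu) (negbTE xv).
have prodA : (\prod_x #|A x| = #|A u| * #|A v| * rest)%N.
  by rewrite (bigD1 u) //= (bigD1 v) 1?eq_sym //= mulnA.
have cover : [set f : {ffun I -> VT} | [forall x, f x \in A x] && ~~ t (f u) (f v)]
    \subset \bigcup_(p in BP) [set f : {ffun I -> VT} | [forall x, f x \in A_at p x]].
  apply/subsetP => f; rewrite inE => /andP[/forallP fA tf]; apply/bigcupP.
  exists (f u, f v); first by rewrite !inE /= fA fA.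
  rewrite inE; apply/forallP => x; rewrite /A_at.
  by case: eqP => [->|_]; [rewrite inE | case: eqP => [->|_]; rewrite ?inE].
apply: le_trans (_ : (#|BP| * rest)%:R <= _).
  rewrite ler_nat; apply: leq_trans (subset_leq_card cover) _.
  apply: leq_trans (leq_card_bigcup _ _) _.
  by under eq_bigr do rewrite card_A_at; rewrite sum_nat_const.
rewrite prodA natrM (natrM _ (#|A u| * #|A v|)) mulrA ler_wpM2r //.
exact: card_nonedge_pairs_le.
Qed.

End NonEdges.

Lemma prod_block_pow (R : comPzSemiRingType) h l (part : 'I_h -> 'I_l) (F : 'I_l -> R) :
  (\prod_(i < l) F i ^+ #|block part i| = \prod_(x < h) F (part x))%R.
Proof.
rewrite (partition_big part predT) //=; apply: eq_bigr => i _.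
rewrite (eq_bigr (fun _ => F i)) => [|x /eqP -> //].
by rewrite prodr_const; congr (_ ^+ _)%R; apply: eq_card => x; rewrite inE.
Qed.

Lemma cross_edge_arrow h l (e : rel 'I_h) (part : 'I_h -> 'I_l) :
  (forall i j : 'I_l, i < j ->
     arrow e (block part i) (block part j) \/ arrow e (block part j) (block part i)) ->
  forall u v, e u v -> part u != part v -> arrow e (block part (part u)) (block part (part v)).
Proof.
move=> arr u v euv puv.
have no_back : ~ arrow e (block part (part v)) (block part (part u)).
  by move=> /(_ v u); rewrite !inE !eqxx euv => /(_ isT isT).
have [lt_uv|gt_uv|eq_uv] := ltngtP (part u) (part v).
- by case: (arr _ _ lt_uv) => // /no_back.
- by case: (arr _ _ gt_uv) => // /no_back.
- by rewrite (val_inj eq_uv) eqxx in puv.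
Qed.

Section Gluing.

Variables (h l : nat) (e : rel 'I_h) (part : 'I_h -> 'I_l).
Variables (VT : finType) (t : rel VT) (v0 : VT) (W : 'I_l -> {set VT}).

Definition block_embs (i : 'I_l) := ordered_emb t v0 (block_rank e part) (block part i) (W i).

Definition glued : {set {ffun 'I_l -> {ffun 'I_h -> VT}}} :=
  [set G : {ffun 'I_l -> {ffun 'I_h -> VT}} | [forall i, G i \in block_embs i]].

Definition glue (G : {ffun 'I_l -> {ffun 'I_h -> VT}}) : {ffun 'I_h -> VT} :=
  [ffun x => G (part x) x].

Definition cross_edge (p : 'I_h * 'I_h) := e p.1 p.2 && (part p.1 != part p.2).

Definition nonedge_maps (u v : 'I_h) : {set {ffun 'I_h -> VT}} :=
  [set f : {ffun 'I_h -> VT} | [forall x, f x \in W (part x)] && ~~ t (f u) (f v)].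

Lemma glued_block G i x : G \in glued ->
  if part x == i then G i x \in W i else G i x == v0.
Proof. by rewrite inE => /forallP/(_ i); rewrite inE => /andP[/forallP/(_ x)]; rewrite inE. Qed.

Lemma glue_in_W G x : G \in glued -> glue G x \in W (part x).
Proof. by move/(glued_block (part x) x); rewrite eqxx ffunE. Qed.

Lemma glue_ordered G u v : G \in glued -> part u = part v ->
  block_rank e part u < block_rank e part v -> t (glue G u) (glue G v).
Proof.
rewrite inE => /forallP/(_ (part u)); rewrite inE => /andP[_ /forallP/(_ u)/forallP/(_ v)].
by rewrite !inE !ffunE eqxx => + puv; rewrite puv eqxx /= => /implyP.
Qed.

Lemma glue_inj : {in glued &, injective glue}.
Proof.
move=> G G' GG G'G /ffunP glue_eq; apply/ffunP => i; apply/ffunP => x.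
have := glued_block i x GG; have := glued_block i x G'G.
case: eqP => [<- _ _|_ /eqP-> /eqP-> //].
by have := glue_eq x; rewrite !ffunE.
Qed.

Hypothesis block_acyclic : forall i, acyclic_on e (block part i).
Hypothesis t_irr : irreflexive t.
Hypothesis W_disj : forall i j, i != j -> [disjoint W i & W j].

Lemma glue_inj_hom_or_nonedge G : G \in glued ->
  glue G \in inj_homs e t :|: \bigcup_(p | cross_edge p) nonedge_maps p.1 p.2.
Proof.
move=> GG; rewrite in_setU.
have [_|not_nonedge] := boolP (glue G \in \bigcup_(p | cross_edge p) nonedge_maps p.1 p.2).
  by rewrite orbT.
rewrite orbF inE; apply/andP; split.
  apply/forallP => u; apply/forallP => v; apply/implyP => euv.
  have [puv|puv] := eqVneq (part u) (part v).
    exact: glue_ordered (block_rank_lt block_acyclic euv puv).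
  apply: contraNT not_nonedge => not_t; apply/bigcupP.
  exists (u, v); first by rewrite /cross_edge euv.
  by rewrite inE not_t andbT; apply/forallP => x; apply: glue_in_W.
apply/injectiveP => u v glue_uv; apply/eqP; apply: contraT => uv.
have [puv|puv] := eqVneq (part u) (part v); last first.
  by have := disjointFr (W_disj puv) (glue_in_W u GG); rewrite glue_uv glue_in_W.
have : block_rank e part u != block_rank e part v by rewrite (inj_eq (@block_rank_inj _ _ _ _)).
rewrite neq_ltn => /orP[lt_uv|lt_vu].
  by have := glue_ordered GG puv lt_uv; rewrite glue_uv t_irr.
by have := glue_ordered GG (esym puv) lt_vu; rewrite glue_uv t_irr.
Qed.

Lemma card_glued_le :
  #|glued| <= #|inj_homs e t| + \sum_(p | cross_edge p) #|nonedge_maps p.1 p.2|.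
Proof.
rewrite -(card_in_imset glue_inj).
have sub : glue @: glued \subset inj_homs e t :|: \bigcup_(p | cross_edge p) nonedge_maps p.1 p.2.
  by apply/subsetP => _ /imsetP[G GG ->]; exact: glue_inj_hom_or_nonedge.
apply: leq_trans (subset_leq_card sub) _; apply: leq_trans (leq_card_setU _ _).1 _.
by rewrite leq_add2l leq_card_bigcup.
Qed.

Hypothesis t_total : forall x y, x != y -> t x y || t y x.
Hypothesis W_large : forall i, 2 ^ h.-1 <= #|W i|.

Section Counting.

Variable R : realFieldType.
Local Open Scope ring_scope.

Lemma card_glued_ge :
  emb_const h ^+ l * \prod_i #|W i|%:R ^+ #|block part i| <= #|glued|%:R :> R.
Proof.
have -> : emb_const h ^+ l = \prod_(i < l) emb_const h :> R by rewrite prodr_const card_ord.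
rewrite card_ffun_family natr_prod -big_split /=; apply: ler_prod => i _.
rewrite mulr_ge0 ?exprn_ge0 ?(ltW (emb_const_gt0 R h)) //=.
have block_le : (#|block part i| <= h)%N by rewrite -[X in (_ <= X)%N](card_ord h) max_card.
have guard : (0 < #|block part i| -> 2 ^ #|block part i|.-1 <= #|W i|)%N.
  by move=> _; apply: leq_trans (W_large i); rewrite leq_exp2l //; lia.
apply: le_trans (card_ordered_emb_ge v0 (block_rank e part) t_total R (erefl _) guard).
by rewrite ler_wpM2r ?exprn_ge0 ?emb_const_le.
Qed.

Lemma sum_card_nonedge_le (eta : R) : 0 <= eta ->
  (forall u v, cross_edge (u, v) -> 1 - eta <= dens R t (W (part u)) (W (part v))) ->
  (\sum_(p | cross_edge p) #|nonedge_maps p.1 p.2|)%:R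
    <= (h * h)%N%:R * eta * \prod_i #|W i|%:R ^+ #|block part i|.
Proof.
move=> eta_ge0 cross_dens; rewrite prod_block_pow -natr_prod natr_sum -mulrA.
apply: le_trans (_ : \sum_(p : 'I_h * 'I_h) eta * (\prod_x #|W (part x)|)%:R <= _).
  rewrite [X in _ <= X](bigID cross_edge) /= -[X in X <= _]addr0 lerD ?sumr_ge0 //.
    apply: ler_sum => -[u v] cross_uv; apply: card_nonedge_ffun_le (cross_dens _ _ cross_uv).
    by apply: contraNneq (proj2 (andP cross_uv)) => ->.
  by move=> p _; rewrite mulr_ge0.
by rewrite sumr_const card_prod card_ord mulr_natl.
Qed.

Lemma ncopies_ge : (0 < h)%N -> (l <= h)%N ->
  (forall u v, cross_edge (u, v) ->
     1 - emb_const h ^+ h / (2 * h * h)%N%:R <= dens R t (W (part u)) (W (part v))) ->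
  emb_const h ^+ h / (2 * h.+1 ^ h)%N%:R * \prod_i #|W i|%:R ^+ #|block part i|
    <= (ncopies e t)%:R :> R.
Proof.
move=> h_gt0 l_le cross_dens.
set c := emb_const h ^+ h; set M := \prod_i _; set eta := c / (2 * h * h)%N%:R.
have c_gt0 : 0 < c by rewrite exprn_gt0 ?emb_const_gt0.
have M_ge0 : 0 <= M by rewrite prodr_ge0 // => i _; rewrite exprn_ge0.
have eta_h : (h * h)%N%:R * eta = c / 2.
  by rewrite /eta !natrM; field; rewrite pnatr_eq0 -lt0n.
have c_le : c <= emb_const h ^+ l.
  by rewrite ler_wiXn2l ?emb_const_le1 ?(ltW (emb_const_gt0 R h)).
have glued_ge : emb_const h ^+ l * M <= #|glued|%:R := card_glued_ge.
have glued_le : #|glued|%:R <= #|inj_homs e t|%:R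
                  + (\sum_(p | cross_edge p) #|nonedge_maps p.1 p.2|)%:R :> R.
  by rewrite -natrD ler_nat card_glued_le.
have eta_ge0 : 0 <= eta by rewrite /eta divr_ge0 // ltW.
have := sum_card_nonedge_le eta_ge0 cross_dens; rewrite -/M eta_h => nonedge_le.
have homs_le : #|inj_homs e t|%:R <= (ncopies e t)%:R * (h.+1 ^ h)%N%:R :> R.
  by rewrite -natrM ler_nat card_inj_homs_le.
have cM_le : c * M <= emb_const h ^+ l * M by rewrite ler_wpM2r.
rewrite natrM mulrAC ler_pdivrMr ?mulr_gt0 ?ltr0n ?expn_gt0 //; lra.
Qed.

End Counting.

End Gluing.

Theorem lemma3p3 (R : realFieldType) (h : nat) (hpos : (0 < h)%N) :
  exists eta alpha : R, (0 < eta)%R /\ (0 < alpha)%R /\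
  forall (e : rel 'I_h), oriented e ->
  forall (l : nat) (part : 'I_h -> 'I_l),
    (forall i : 'I_l, exists x, part x = i) ->
    (forall i : 'I_l, acyclic_on e (block part i)) ->
    (forall i j : 'I_l, (i < j)%N ->
       arrow e (block part i) (block part j) \/ arrow e (block part j) (block part i)) ->
  forall (VT : finType) (t : rel VT), tournament t ->
  forall W : 'I_l -> {set VT},
    (forall i j : 'I_l, i != j -> [disjoint W i & W j]) ->
    (forall i : 'I_l, (2 ^ h.-1 <= #|W i|)%N) ->
    (forall i j : 'I_l, i != j -> arrow e (block part i) (block part j) ->
       (1 - eta <= dens R t (W i) (W j))%R) ->
    (alpha * \prod_(i < l) (#|W i|%:R) ^+ #|block part i| <= (ncopies e t)%:R)%R.
Proof.
have c_gt0 : (0 < emb_const h ^+ h :> R)%R by rewrite exprn_gt0 ?emb_const_gt0.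
exists (emb_const h ^+ h / (2 * h * h)%N%:R)%R, (emb_const h ^+ h / (2 * h.+1 ^ h)%N%:R)%R.
split; first by rewrite divr_gt0 // ltr0n !muln_gt0 hpos.
split; first by rewrite divr_gt0 // ltr0n muln_gt0 expn_gt0.
move=> e _ l part part_surj block_acyclic arr VT t [[t_irr _] t_total] W W_disj W_large dens_arrow.
have [v0 _] : exists v0, v0 \in W (part (Ordinal hpos)).
  by apply/card_gt0P; apply: leq_trans (W_large _); rewrite expn_gt0.
have l_le : (l <= h)%N.
  have : [set: 'I_l] \subset part @: [set: 'I_h].
    by apply/subsetP => i _; have [x <-] := part_surj i; rewrite imset_f.
  by move/subset_leq_card/leq_trans/(_ (leq_imset_card _ _)); rewrite !cardsT !card_ord.
apply: (ncopies_ge v0 block_acyclic t_irr W_disj t_total W_large hpos l_le).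
move=> u v /andP[euv puv]; exact: dens_arrow puv (cross_edge_arrow arr euv puv).
Qed.
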